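(* Let $n,m>3$ be integers and let $\psi$ be an automorphism of $\mathcal{CSR}(m,n)$. Then there is a permutation $\sigma$ of $[m]$ such that for all distinct $a,b\in[m]$, $\psi$ maps the parts of $\mathcal{P}_{ab}$ onto the parts of $\mathcal{P}_{\sigma(a)\sigma(b)}$, i.e. $\psi(\mathcal{P}_{ab})=\mathcal{P}_{\sigma(a)\sigma(b)}$.
   Context: For positive integers $m,n$, the cyclic simplicial rook graph $\mathcal{CSR}(m,n)$ is the graph whose vertices are the vectors $(a_1,\dots,a_m)\in\mathbb{Z}_n^m$ with $a_1+\cdots+a_m\equiv 0 \pmod n$, two vertices being adjacent if and only if their vectors differ in exactly two coordinates. $[m]=\{1,\dots,m\}$; $e_i\in\mathbb{Z}_n^m$ is the vector with $1$ in coordinate $i$ and $0$ elsewhere; for distinct $a,b\in[m]$, $S_{ab}=\{\alpha(e_a-e_b)\mid \alpha\in\mathbb{Z}_n\}$ (note $S_{ab}=S_{ba}$), $x+A=\{x+y\mid y\in A\}$, and $\mathcal{P}_{ab}=\{\xi+S_{ab}\mid \xi \text{ a vertex of } \mathcal{CSR}(m,n)\}$, which is a partition of the vertex set. $\psi(\mathcal{P}_{ab})$ denotes $\{\psi(P)\mid P\in\mathcal{P}_{ab}\}$. *)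

From HB Require Import structures.
From mathcomp Require Import all_boot all_order all_algebra all_fingroup.
Set Implicit Arguments. Unset Strict Implicit. Unset Printing Implicit Defensive.
Import GRing.Theory.
Local Open Scope ring_scope.

(* Vertices of CSR(m,n): vectors in Z_n^m (as finite functions 'I_m -> 'Z_n)
   whose coordinates sum to 0 mod n.  'Z_n is Z/nZ for n >= 2 (we use n > 3). *)
Definition csr_vertex (m n : nat) :=
  {f : {ffun 'I_m -> 'Z_n} | \sum_(i < m) f i == 0}.

Definition csr_adj (m n : nat) (x y : csr_vertex m n) : bool :=
  #|[set i : 'I_m | val x i != val y i]| == 2%N.

Definition csr_automorphism (m n : nat) (psi : csr_vertex m n -> csr_vertex m n) :=
  bijective psi /\ forall x y, csr_adj (psi x) (psi y) = csr_adj x y.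

Definition edelta (m n : nat) (a b : 'I_m) (alpha : 'Z_n) : {ffun 'I_m -> 'Z_n} :=
  [ffun i => alpha * ((i == a)%:R - (i == b)%:R)].

Arguments edelta {m n} a b alpha.

Definition csr_part (m n : nat) (a b : 'I_m) (xi : csr_vertex m n) : {set csr_vertex m n} :=
  [set y : csr_vertex m n | [exists alpha : 'Z_n,
      [forall i : 'I_m, val y i == val xi i + edelta a b alpha i]]].

Arguments csr_part {m} n a b xi.

Definition csr_partition (m n : nat) (a b : 'I_m) : {set {set csr_vertex m n}} :=
  [set csr_part n a b xi | xi : csr_vertex m n].

Arguments csr_partition {m} n a b.

Definition image_partition (m n : nat) (psi : csr_vertex m n -> csr_vertex m n)
  (P : {set {set csr_vertex m n}}) : {set {set csr_vertex m n}} :=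
  [set psi @: B | B : {set csr_vertex m n} in P].

From mathcomp Require Import all_boot all_order all_algebra all_fingroup.
From mathcomp Require Import zify.
Set Implicit Arguments. Unset Strict Implicit. Unset Printing Implicit Defensive.
Import GRing.Theory.
Local Open Scope ring_scope.

(* Every neighbour of a vertex x is x + alpha (e_a - e_b) with a <> b and
   alpha <> 0, and {a, b} is the direction of that edge.  In a triangle x, y, w
   the two edges at x either have the same direction or form a star
   alpha (e_c - e_t1), alpha (e_c - e_t2).  The two kinds are told apart by a
   purely graph-theoretic property: a same-direction triangle has a second
   triangle at x, in a disjoint direction, whose "hull" (its two other vertices
   and their common neighbours with x) is disjoint from and non-adjacent to its
   own, whereas every triangle at x meets the hull of a star.  Hence psi
   preserves directions at x up to a relabelling, and following the stars
   x + (e_a - e_d), d <> a, whose images share a common centre sigma_x(a), this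
   relabelling is a permutation sigma_x of [m].  Comparing the two endpoints of
   an edge shows that sigma_x is constant along edges, hence constant since the
   graph is connected, and psi maps xi + S_ab into, hence onto,
   psi(xi) + S_{sigma(a) sigma(b)}. *)

Lemma Zp_one_neq_opp (n : nat) : (2 < n)%N -> (1 : 'Z_n) != - 1.
Proof.
move=> n_gt2; have n_gt1 : (1 < n)%N by lia.
rewrite -subr_eq0 opprK; apply/eqP => /(congr1 (@nat_of_ord _)).
by rewrite -[1 + 1]/(2%:R : 'Z_n) val_Zp_nat // modn_small //; lia.
Qed.

Lemma Zp_self_opp_uniq (n : nat) (x y : 'Z_n) :
  x != 0 -> x = - x -> y != 0 -> y = - y -> x = y.
Proof.
move=> x0 xN y0 yN; apply: ord_inj.
have x0' : nat_of_ord x != 0%N by exact: x0.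
have y0' : nat_of_ord y != 0%N by exact: y0.
move: (congr1 (@nat_of_ord _) xN) (congr1 (@nat_of_ord _) yN) (ltn_ord x) (ltn_ord y).
move=> /= xN' yN' ltx lty.
by rewrite modn_small in xN'; rewrite modn_small in yN'; lia.
Qed.

Lemma oppr_neq0 (V : zmodType) (x : V) : x != 0 -> - x != 0.
Proof. by rewrite oppr_eq0. Qed.

Lemma exists_notin (m : nat) (s : seq 'I_m) : (size s < m)%N -> exists i, i \notin s.
Proof.
move=> lt_s_m; case: (pickP [pred i | i \notin s]) => [i|s_full]; first by exists i.
suff: (#|'I_m| <= size s)%N by rewrite card_ord leqNgt lt_s_m.
apply: leq_trans (card_size s); apply/subset_leq_card/subsetP => i _.
by move/negbT: (s_full i); rewrite negbK.
Qed.

Section ElementaryVectors.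
Variables m n : nat.
Implicit Types (a b c d i : 'I_m) (alpha beta : 'Z_n).

Lemma ffunDE (f g : {ffun 'I_m -> 'Z_n}) i : (f + g) i = f i + g i.
Proof. exact: ffunE. Qed.

Lemma edelta_fst a b alpha : a != b -> edelta a b alpha a = alpha.
Proof. by move=> ab; rewrite ffunE eqxx (negbTE ab) subr0 mulr1. Qed.

Lemma edelta_snd a b alpha : a != b -> edelta a b alpha b = - alpha.
Proof. by move=> ab; rewrite ffunE eqxx eq_sym (negbTE ab) sub0r mulrN1. Qed.

Lemma edelta_out a b alpha i : i != a -> i != b -> edelta a b alpha i = 0.
Proof. by move=> ia ib; rewrite ffunE (negbTE ia) (negbTE ib) subrr mulr0. Qed.

Lemma edelta_supp a b alpha i : edelta a b alpha i != 0 -> i = a \/ i = b.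
Proof.
case: (eqVneq i a) => [->|ia]; first by left.
case: (eqVneq i b) => [->|ib]; first by right.
by rewrite edelta_out ?eqxx.
Qed.

Lemma edeltaC a b alpha : edelta a b alpha = edelta b a (- alpha).
Proof. by apply/ffunP => i; rewrite !ffunE mulNr -mulrN opprB. Qed.

Lemma edeltaD a b alpha beta :
  edelta a b alpha + edelta a b beta = edelta a b (alpha + beta).
Proof. by apply/ffunP => i; rewrite !ffunE mulrDl. Qed.

Lemma edelta_trans a b c alpha :
  edelta a b alpha + edelta b c alpha = edelta a c alpha.
Proof. by apply/ffunP => i; rewrite !ffunE -mulrDr addrA subrK. Qed.

Lemma edelta0 a b : edelta a b 0 = 0 :> {ffun 'I_m -> 'Z_n}.
Proof. by apply/ffunP => i; rewrite !ffunE mul0r. Qed.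

Lemma edelta_inj a b : a != b -> injective (@edelta m n a b).
Proof. by move=> ab alpha beta e; rewrite -(edelta_fst alpha ab) e edelta_fst. Qed.

Lemma edelta_eq a b alpha c d beta : a != b -> alpha != 0 -> c != d ->
  edelta a b alpha = edelta c d beta ->
  (a = c /\ b = d /\ beta = alpha) \/ (a = d /\ b = c /\ beta = - alpha).
Proof.
move=> ab alpha0 cd e.
have: edelta c d beta a != 0 by rewrite -e edelta_fst.
have: edelta c d beta b != 0 by rewrite -e edelta_snd // oppr_eq0.
move=> /edelta_supp [] bE /edelta_supp [] aE; subst; rewrite ?eqxx // in ab.
- right; do 2 split => //; apply: oppr_inj.
  by rewrite -(edelta_fst beta cd) -e edelta_snd.
- by left; do 2 split => //; apply: (edelta_inj cd); rewrite e.
Qed.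

Lemma sum_edelta a b alpha : \sum_i edelta a b alpha i = 0.
Proof.
case: (eqVneq a b) => [<-|ab].
  by rewrite big1 // => i _; rewrite ffunE subrr mulr0.
rewrite (bigD1 a) //= (bigD1 b) 1?eq_sym //= big1 => [|i /andP[ia ib]].
  by rewrite edelta_fst // edelta_snd // addr0 subrr.
exact: edelta_out.
Qed.

Lemma edelta_of_supp (f : {ffun 'I_m -> 'Z_n}) a b : a != b ->
  \sum_i f i = 0 -> (forall i, i != a -> i != b -> f i = 0) -> f = edelta a b (f a).
Proof.
move=> ab sum0 supp; have ba : b != a by rewrite eq_sym.
have fb : f b = - f a.
  apply/eqP; rewrite -addr_eq0 addrC -sum0 (bigD1 a) //= (bigD1 b) //= big1 ?addr0 //.
  by move=> i /andP[ia ib]; apply: supp.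
apply/ffunP => i; case: (eqVneq i a) => [->|ia]; first by rewrite edelta_fst.
case: (eqVneq i b) => [->|ib]; first by rewrite edelta_snd.
by rewrite edelta_out // supp.
Qed.

Lemma edelta_supp_pair a b alpha i j k : i != j -> i != k -> j != k ->
  edelta a b alpha i != 0 -> edelta a b alpha j != 0 -> edelta a b alpha k = 0.
Proof.
move=> ij ik jk /edelta_supp[] iE /edelta_supp[] jE; subst; rewrite ?eqxx // in ij;
  by apply: edelta_out; rewrite eq_sym.
Qed.

Definition parallel (u v : {ffun 'I_m -> 'Z_n}) := exists a b alpha beta,
  [/\ a != b, alpha != 0, beta != 0, u = edelta a b alpha & v = edelta a b beta].

Definition star_pair (u v : {ffun 'I_m -> 'Z_n}) := exists c t1 t2 alpha,
  [/\ c != t1, c != t2, t1 != t2, alpha != 0 &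
      u = edelta c t1 alpha /\ v = edelta c t2 alpha].

Lemma edelta_sum_cases p q alpha r s beta c t gamma :
  p != q -> alpha != 0 -> r != s -> beta != 0 -> c != t ->
  edelta r s beta = edelta p q alpha + edelta c t gamma ->
  parallel (edelta p q alpha) (edelta r s beta) \/
  star_pair (edelta p q alpha) (edelta r s beta).
Proof.
move=> pq alpha0 rs beta0 ct e.
have diffE i : edelta c t gamma i = edelta r s beta i - edelta p q alpha i.
  by rewrite e ffunDE addrAC subrr add0r.
(* After reorienting the two representations (edeltaC) they share their first
   index; if their supports were disjoint, edelta c t gamma would not vanish at
   p, q and r. *)
wlog pr : p q alpha r s beta pq alpha0 rs beta0 e diffE / p = r.
  move=> base.
  have qp : q != p by rewrite eq_sym.
  have sr : s != r by rewrite eq_sym.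
  case: (eqVneq p r) => [|p_r]; first exact: base.
  case: (eqVneq p s) => [ps|p_s].
    by rewrite (edeltaC r) in e diffE *; apply: base; rewrite ?oppr_eq0.
  case: (eqVneq q r) => [qr|q_r].
    by rewrite (edeltaC p) in e diffE *; apply: base; rewrite ?oppr_eq0.
  case: (eqVneq q s) => [qs|q_s].
    by rewrite (edeltaC p) (edeltaC r) in e diffE *; apply: base; rewrite ?oppr_eq0.
  have rp : r != p by rewrite eq_sym.
  have rq : r != q by rewrite eq_sym.
  have /eqP[] : edelta c t gamma r != 0.
    by rewrite diffE edelta_fst // (edelta_out _ rp rq) subr0.
  apply: (@edelta_supp_pair _ _ _ p q); rewrite // diffE.
  - by rewrite edelta_out // edelta_fst // sub0r oppr_eq0.
  - by rewrite edelta_out // edelta_snd // sub0r opprK.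
subst r; case: (eqVneq q s) => [<-|qs]; first by left; exists p, q, alpha, beta.
right; exists p, q, s, alpha; split => //; split => //; congr (edelta p s _).
have qp : q != p by rewrite eq_sym.
have sp : s != p by rewrite eq_sym.
have sq : s != q by rewrite eq_sym.
have tp : edelta c t gamma p = 0.
  apply: (@edelta_supp_pair _ _ _ q s) => //; rewrite diffE.
  - by rewrite (edelta_out _ qp qs) edelta_snd // sub0r opprK.
  - by rewrite edelta_snd // (edelta_out _ sp sq) subr0 oppr_eq0.
by apply/eqP; rewrite -subr_eq0 -(edelta_fst beta rs) -(edelta_fst alpha pq) -diffE tp.
Qed.

End ElementaryVectors.

Section Vertices.
Variables m n : nat.
Local Notation vertex := (csr_vertex m n).
Implicit Types (x y w u v z : vertex) (a b c d i : 'I_m) (alpha beta : 'Z_n).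

Lemma csr_shift_subproof x a b alpha :
  \sum_(i < m) (val x + edelta a b alpha) i == 0.
Proof.
rewrite (eq_bigr (fun i => val x i + edelta a b alpha i)) => [|i _]; last exact: ffunDE.
by rewrite big_split /= sum_edelta addr0; exact: (valP x).
Qed.

Definition csr_shift x a b alpha : vertex :=
  exist _ (val x + edelta a b alpha) (csr_shift_subproof x a b alpha).

Lemma csr_shiftE x a b alpha : val (csr_shift x a b alpha) = val x + edelta a b alpha.
Proof. by []. Qed.

Lemma csr_shift0 x a b : csr_shift x a b 0 = x.
Proof. by apply: val_inj; rewrite csr_shiftE edelta0 addr0. Qed.

Lemma csr_shiftC x a b alpha : csr_shift x b a alpha = csr_shift x a b (- alpha).
Proof. by apply: val_inj; rewrite !csr_shiftE edeltaC. Qed.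

Lemma offset_uniq x u (f g : {ffun 'I_m -> 'Z_n}) :
  val u = val x + f -> val u = val x + g -> f = g.
Proof. by move=> uf ug; apply: (addrI (val x)); rewrite -uf -ug. Qed.

Lemma csr_adjP x y : csr_adj x y <->
  exists a b alpha, [/\ a != b, alpha != 0 & val y = val x + edelta a b alpha].
Proof.
rewrite /csr_adj; split.
- case/cards2P => a [b [ab diffE]].
  have diffP i : (val x i != val y i) = (i \in [set a; b]) by rewrite -diffE inE.
  pose f := val y - val x.
  have fE i : f i = val y i - val x i by rewrite !ffunE.
  have sum0 : \sum_i f i = 0.
    by rewrite (eq_bigr _ (fun i _ => fE i)) sumrB (eqP (valP y)) (eqP (valP x)) subrr.
  have supp i : i != a -> i != b -> f i = 0.
    move=> ia ib; apply/eqP; rewrite fE subr_eq0 eq_sym; apply/negPn.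
    by rewrite diffP !inE negb_or ia ib.
  exists a, b, (f a); split => //.
    by rewrite fE subr_eq0 eq_sym diffP !inE eqxx.
  by rewrite -(edelta_of_supp ab sum0 supp) addrC subrK.
- case=> a [b [alpha [ab alpha0 ->]]]; apply/cards2P; exists a, b; split => //.
  apply/setP => i; rewrite !inE ffunDE -subr_eq0 opprD addrA subrr sub0r oppr_eq0.
  case: (eqVneq i a) => [->|ia]; first by rewrite edelta_fst.
  case: (eqVneq i b) => [->|ib]; first by rewrite edelta_snd // oppr_eq0 alpha0 orbT.
  by rewrite edelta_out ?eqxx.
Qed.

Lemma csr_adj_edelta x y a b alpha : a != b -> alpha != 0 ->
  val y = val x + edelta a b alpha -> csr_adj x y.
Proof. by move=> ab alpha0 yE; apply/csr_adjP; exists a, b, alpha. Qed.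

Lemma csr_adj_shift x a b alpha : a != b -> alpha != 0 ->
  csr_adj x (csr_shift x a b alpha).
Proof. by move=> ab alpha0; apply: csr_adj_edelta ab alpha0 _. Qed.

Lemma csr_adj_same_line x y w a b alpha beta : a != b -> alpha != beta ->
  val y = val x + edelta a b alpha -> val w = val x + edelta a b beta -> csr_adj y w.
Proof.
move=> ab alpha_beta yE wE; apply: (csr_adj_edelta (alpha := beta - alpha)) ab _ _.
  by rewrite subr_eq0 eq_sym.
by rewrite wE yE -addrA edeltaD [alpha + _]addrC subrK.
Qed.

Lemma csr_adj_star x y w c t1 t2 alpha : t1 != t2 -> alpha != 0 ->
  val y = val x + edelta c t1 alpha -> val w = val x + edelta c t2 alpha -> csr_adj y w.
Proof.
move=> t12 alpha0 yE wE; apply: (csr_adj_edelta t12 alpha0).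
by rewrite wE yE -addrA edelta_trans.
Qed.

Lemma csr_adj_irr x : ~~ csr_adj x x.
Proof.
apply/negP => /csr_adjP [a [b [alpha [ab alpha0 e]]]].
have e0 : edelta a b alpha = 0 by apply: (offset_uniq e); rewrite addr0.
by move: (edelta_fst alpha ab); rewrite e0 ffunE => /eqP; rewrite eq_sym (negbTE alpha0).
Qed.

Definition same_line x y w := exists a b alpha beta,
  [/\ a != b, alpha != 0, beta != 0,
      val y = val x + edelta a b alpha & val w = val x + edelta a b beta].

Definition star x y w := exists c t1 t2 alpha,
  [/\ c != t1, c != t2, t1 != t2, alpha != 0 &
      val y = val x + edelta c t1 alpha /\ val w = val x + edelta c t2 alpha].

Lemma triangle_cases x y w : csr_adj x y -> csr_adj x w -> csr_adj y w ->
  same_line x y w \/ star x y w.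
Proof.
case/csr_adjP => p [q [alpha [pq alpha0 yE]]].
case/csr_adjP => r [s [beta [rs beta0 wE]]].
case/csr_adjP => c [t [gamma [ct _ wyE]]].
have e : edelta r s beta = edelta p q alpha + edelta c t gamma.
  by apply: (addrI (val x)); rewrite -wE wyE yE addrA.
case: (edelta_sum_cases pq alpha0 rs beta0 ct e) =>
  [[a [b [al [be []]]]]|[c0 [t1 [t2 [al []]]]]].
- by move=> ab al0 be0 yE' wE'; left; exists a, b, al, be; rewrite -yE' -wE'.
- by move=> ct1 ct2 t12 al0 [yE' wE']; right; exists c0, t1, t2, al; rewrite -yE' -wE'.
Qed.

Lemma star_same_scalar z y w p q r alpha beta : p != q -> p != r -> q != r ->
  alpha != 0 -> beta != 0 ->
  val y = val z + edelta p q alpha -> val w = val z + edelta p r beta ->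
  csr_adj y w -> alpha = beta.
Proof.
move=> pq pr qr alpha0 beta0 yE wE yw.
have zy := csr_adj_edelta pq alpha0 yE; have zw := csr_adj_edelta pr beta0 wE.
case: (triangle_cases zy zw yw) => [[a [b [al [be [ab al0 be0 yE' wE']]]]]|].
  have := edelta_eq pq alpha0 ab (offset_uniq yE yE').
  have := edelta_eq pr beta0 ab (offset_uniq wE wE').
  by do 2!case=> [[? [? _]]|[? [? _]]]; subst; rewrite ?eqxx in pq pr qr.
case=> c [t1 [t2 [al [ct1 ct2 t12 al0 [yE' wE']]]]].
have := edelta_eq pq alpha0 ct1 (offset_uniq yE yE').
have := edelta_eq pr beta0 ct2 (offset_uniq wE wE').
by do 2!case=> [[? [? ?]]|[? [? ?]]]; subst; rewrite ?eqxx in pq pr qr t12.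
Qed.

Lemma same_line_dirs x y w a b alpha c d beta :
  a != b -> alpha != 0 -> c != d -> beta != 0 -> same_line x y w ->
  val y = val x + edelta a b alpha -> val w = val x + edelta c d beta ->
  (a = c /\ b = d) \/ (a = d /\ b = c).
Proof.
move=> ab alpha0 cd beta0 [p [q [al [be [pq al0 be0 yE' wE']]]]] yE wE.
have := edelta_eq ab alpha0 pq (offset_uniq yE yE').
have := edelta_eq cd beta0 pq (offset_uniq wE wE').
by do 2!case=> [[? [? _]]|[? [? _]]]; subst; [left|right|right|left].
Qed.

Lemma disjoint_lines_separated x u v a b c d alpha beta :
  a != b -> c != d -> alpha != 0 -> beta != 0 ->
  c != a -> c != b -> d != a -> d != b ->
  val u = val x + edelta a b alpha -> val v = val x + edelta c d beta ->
  u <> v /\ ~~ csr_adj u v.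
Proof.
move=> ab cd alpha0 beta0 ca cb da db uE vE; split.
  move=> uv; subst v.
  by case: (edelta_eq ab alpha0 cd (offset_uniq uE vE)) => [[? _]|[? _]]; subst;
    rewrite eqxx in ca da.
apply/negP => uv.
have xu := csr_adj_edelta ab alpha0 uE; have xv := csr_adj_edelta cd beta0 vE.
case: (triangle_cases xu xv uv) => [[p [q [al [be [pq al0 be0 uE' vE']]]]]|].
  have := edelta_eq ab alpha0 pq (offset_uniq uE uE').
  have := edelta_eq cd beta0 pq (offset_uniq vE vE').
  by do 2!case=> [[? [? _]]|[? [? _]]]; subst; rewrite ?eqxx in ca cb da db.
case=> p [t1 [t2 [al [pt1 pt2 t12 al0 [uE' vE']]]]].
have := edelta_eq ab alpha0 pt1 (offset_uniq uE uE').
have := edelta_eq cd beta0 pt2 (offset_uniq vE vE').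
by do 2!case=> [[? [? _]]|[? [? _]]]; subst; rewrite ?eqxx in ca cb da db.
Qed.

Definition hull x y w u := u = y \/ u = w \/ [/\ csr_adj x u, csr_adj y u & csr_adj w u].

Lemma hull_same_line x y w u a b alpha beta : a != b -> alpha != 0 -> beta != 0 ->
  val y = val x + edelta a b alpha -> val w = val x + edelta a b beta -> csr_adj y w ->
  hull x y w u -> exists gamma, gamma != 0 /\ val u = val x + edelta a b gamma.
Proof.
move=> ab alpha0 beta0 yE wE yw.
case=> [->|[->|[xu yu wu]]]; [by exists alpha | by exists beta|].
have alpha_beta : alpha != beta.
  apply: contraTneq yw => eq_ab; have -> : y = w by apply: val_inj; rewrite yE wE eq_ab.
  exact: csr_adj_irr.
case/csr_adjP: xu => c [t [gamma [ct gamma0 uE]]].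
wlog /orP[/eqP ca|/eqP cb] : c t gamma ct gamma0 uE / (c == a) || (c == b).
  move=> base; have [c_ab|] := boolP ((c == a) || (c == b)).
    exact: base ct gamma0 uE c_ab.
  rewrite negb_or => /andP[ca cb]; case/boolP: ((t == a) || (t == b)) => [t_ab|].
    by apply: (base t c (- gamma)); rewrite ?oppr_eq0 -?edeltaC // eq_sym.
  rewrite negb_or => /andP[ta tb].
  by case: (disjoint_lines_separated ab ct alpha0 gamma0 ca cb ta tb yE uE); rewrite yu.
- subst c; case: (eqVneq t b) => [tE|tb]; first by exists gamma; rewrite uE tE.
  have bt : b != t by rewrite eq_sym.
  have := star_same_scalar ab ct bt alpha0 gamma0 yE uE yu.
  have := star_same_scalar ab ct bt beta0 gamma0 wE uE wu.
  by move=> eq_bg eq_ag; rewrite eq_ag eq_bg eqxx in alpha_beta.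
- subst c; case: (eqVneq t a) => [tE|ta].
    by exists (- gamma); rewrite oppr_eq0 uE tE edeltaC.
  have ba : b != a by rewrite eq_sym.
  have a_t : a != t by rewrite eq_sym.
  rewrite (edeltaC a) in yE; rewrite (edeltaC a) in wE.
  have eq_ag := star_same_scalar ba ct a_t (oppr_neq0 alpha0) gamma0 yE uE yu.
  have eq_bg := star_same_scalar ba ct a_t (oppr_neq0 beta0) gamma0 wE uE wu.
  by move: alpha_beta; rewrite -(opprK alpha) -(opprK beta) eq_ag eq_bg eqxx.
Qed.

Definition collinear x y w :=
  [/\ csr_adj x y, csr_adj x w, csr_adj y w &
   exists y' w', [/\ csr_adj x y', csr_adj x w', csr_adj y' w' &
     forall u v, hull x y w u -> hull x y' w' v -> u <> v /\ ~~ csr_adj u v]].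

Lemma line_collinear x y w a b alpha beta : (3 < m)%N -> (2 < n)%N ->
  a != b -> alpha != 0 -> beta != 0 ->
  val y = val x + edelta a b alpha -> val w = val x + edelta a b beta -> csr_adj y w ->
  collinear x y w.
Proof.
move=> m_gt3 n_gt2 ab alpha0 beta0 yE wE yw.
have one_mone := Zp_one_neq_opp n_gt2.
have one0 : (1 : 'Z_n) != 0 := oner_neq0 _.
have mone0 : (- 1 : 'Z_n) != 0 := oppr_neq0 one0.
have [c] : exists c, c \notin [:: a; b] by apply: exists_notin => /=; lia.
have [d] : exists d, d \notin [:: a; b; c] by apply: exists_notin => /=; lia.
rewrite !inE !negb_or => /and3P[da db dc] /andP[ca cb].
have cd : c != d by rewrite eq_sym.
have y'w' : csr_adj (csr_shift x c d 1) (csr_shift x c d (- 1)).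
  exact: csr_adj_same_line cd one_mone (csr_shiftE _ _ _ _) (csr_shiftE _ _ _ _).
split; [exact: csr_adj_edelta yE | exact: csr_adj_edelta wE | done |].
exists (csr_shift x c d 1), (csr_shift x c d (- 1)).
split; [exact: csr_adj_shift | exact: csr_adj_shift | done |] => u v hu hv.
have [g [g0 uE]] := hull_same_line ab alpha0 beta0 yE wE yw hu.
have [g' [g'0 vE]] :=
  hull_same_line cd one0 mone0 (csr_shiftE _ _ _ _) (csr_shiftE _ _ _ _) y'w' hv.
exact: disjoint_lines_separated ab cd g0 g'0 ca cb da db uE vE.
Qed.

Lemma hull_star_shift x y w p q r alpha s : p != q -> p != r -> q != r -> alpha != 0 ->
  p != s -> val y = val x + edelta p q alpha -> val w = val x + edelta p r alpha ->
  hull x y w (csr_shift x p s alpha).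
Proof.
move=> pq pr qr alpha0 ps yE wE.
case: (eqVneq s q) => [->|sq]; first by left; apply: val_inj; rewrite yE.
case: (eqVneq s r) => [->|sr]; first by right; left; apply: val_inj; rewrite wE.
right; right; split; first exact: csr_adj_shift.
- by apply: (csr_adj_star _ alpha0 yE); rewrite // eq_sym.
- by apply: (csr_adj_star _ alpha0 wE); rewrite // eq_sym.
Qed.

Lemma hull_line_shift x y w p q alpha beta gamma : p != q ->
  alpha != 0 -> beta != 0 -> gamma != 0 ->
  val y = val x + edelta p q alpha -> val w = val x + edelta p q beta ->
  hull x y w (csr_shift x p q gamma).
Proof.
move=> pq alpha0 beta0 gamma0 yE wE.
case: (eqVneq gamma alpha) => [->|ga]; first by left; apply: val_inj; rewrite yE.
case: (eqVneq gamma beta) => [->|gb]; first by right; left; apply: val_inj; rewrite wE.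
right; right; split; first exact: csr_adj_shift.
- by apply: (csr_adj_same_line pq _ yE); rewrite // eq_sym.
- by apply: (csr_adj_same_line pq _ wE); rewrite // eq_sym.
Qed.

Lemma csr_shift_eq_or_adj x a b alpha beta : a != b ->
  csr_shift x a b alpha = csr_shift x a b beta \/
  csr_adj (csr_shift x a b alpha) (csr_shift x a b beta).
Proof.
move=> ab; case: (eqVneq alpha beta) => [->|alpha_beta]; first by left.
by right; apply: csr_adj_same_line ab alpha_beta _ _.
Qed.

Lemma star_not_collinear x y w : star x y w -> ~ collinear x y w.
Proof.
case=> [a [b [c [al [ab ac bc al0 [yE wE]]]]]] [_ _ _ [y' [w' [xy' xw' y'w' sep]]]].
have inK d : a != d -> hull x y w (csr_shift x a d al).
  by move=> ad; apply: hull_star_shift ab ac bc al0 ad yE wE.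
have meet u v : hull x y w u -> hull x y' w' v -> u = v \/ csr_adj u v -> False.
  move=> hu hv; have [neq nadj] := sep u v hu hv.
  by case=> [/neq|uv] //; rewrite uv in nadj.
case: (triangle_cases xy' xw' y'w') => [[p [q [b1 [b2 [pq b10 b20 y'E w'E]]]]]|].
  have inL gamma : gamma != 0 -> hull x y' w' (csr_shift x p q gamma).
    by move=> gamma0; apply: hull_line_shift pq b10 b20 gamma0 y'E w'E.
  case: (eqVneq a p) => [ap|ap].
    by subst p; apply: (meet _ _ (inK q pq) (inL al al0)); left.
  case: (eqVneq a q) => [aq|aq].
    subst q; apply: (meet _ _ (inK p ap) (inL (- al) (oppr_neq0 al0))).
    by left; rewrite csr_shiftC.
  apply: (meet _ _ (inK q aq) (inL al al0)); right.
  have pa : p != a by rewrite eq_sym.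
  apply: (csr_adj_edelta pa al0).
  by rewrite !csr_shiftE -addrA [edelta a q al + _]addrC edelta_trans.
case=> p [q [r [be [pq pr qr be0 [y'E w'E]]]]].
have inM s : p != s -> hull x y' w' (csr_shift x p s be).
  by move=> ps; apply: hull_star_shift pq pr qr be0 ps y'E w'E.
case: (eqVneq a p) => [ap|ap].
  by subst p; apply: (meet _ _ (inK b ab) (inM b ab)); apply: csr_shift_eq_or_adj.
have pa : p != a by rewrite eq_sym.
apply: (meet _ _ (inK p ap) (inM a pa)); rewrite csr_shiftC.
exact: csr_shift_eq_or_adj.
Qed.

Lemma csr_zero_subproof : \sum_(i < m) (0 : {ffun 'I_m -> 'Z_n}) i == 0.
Proof. by apply/eqP; apply: big1 => i _; rewrite ffunE. Qed.

Definition csr_zero : vertex := exist _ 0 csr_zero_subproof.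

Lemma csr_vertex_ind (P : vertex -> Prop) : P csr_zero ->
  (forall y x a b alpha, a != b -> alpha != 0 -> val x = val y + edelta a b alpha ->
     P y -> P x) ->
  forall x, P x.
Proof.
move=> P0 Pstep x; have [N] := ubnP #|[set i | val x i != 0]|.
elim: N x => // N IH x; rewrite ltnS => supp_x.
case: (pickP [pred i | val x i != 0]) => [i /= xi0|x0]; last first.
  suff -> : x = csr_zero by [].
  by apply: val_inj; apply/ffunP => i; rewrite ffunE; apply/eqP/negbFE/x0.
case: (pickP [pred j | (j != i) && (val x j != 0)]) => [j /andP[ji xj0]|xj0]; last first.
  move: (valP x); rewrite (bigD1 i) //= big1 ?addr0 ?(negbTE xi0) // => j ji.
  by apply/eqP; move: (xj0 j); rewrite /= ji => /negbFE.
have ij : i != j by rewrite eq_sym.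
pose y := csr_shift x i j (- val x i).
apply: (Pstep y x i j (val x i)) => //.
  by rewrite csr_shiftE -addrA edeltaD addNr edelta0 addr0.
apply: IH; apply: leq_trans supp_x.
have xi_in : i \in [set k | val x k != 0] by rewrite inE.
rewrite (cardsD1 i [set k | val x k != 0]) xi_in add1n ltnS subset_leq_card //.
apply/subsetP => k; rewrite !inE csr_shiftE ffunDE.
case: (eqVneq k i) => [->|ki]; first by rewrite edelta_fst // subrr eqxx.
case: (eqVneq k j) => [->|kj]; first by rewrite xj0.
by rewrite edelta_out // addr0.
Qed.

Lemma csr_partE a b xi : csr_part n a b xi = [set csr_shift xi a b alpha | alpha : 'Z_n].
Proof.
apply/setP => y; rewrite inE; apply/existsP/imsetP => [[alpha /forallP yE]|[alpha _ ->]].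
  by exists alpha => //; apply: val_inj; apply/ffunP => i; rewrite (eqP (yE i)) ffunDE.
by exists alpha; apply/forallP => i; rewrite ffunDE.
Qed.

Lemma card_csr_part a b xi : a != b -> #|csr_part n a b xi| = #|'Z_n|.
Proof.
move=> ab; rewrite csr_partE card_imset // => alpha beta /(congr1 val).
by rewrite !csr_shiftE => /addrI; apply: edelta_inj.
Qed.

End Vertices.

Section AutomorphismInvariance.
Variables m n : nat.
Local Notation vertex := (csr_vertex m n).
Variable phi : vertex -> vertex.
Hypothesis phi_aut : csr_automorphism phi.

Let phi_adj x y : csr_adj (phi x) (phi y) = csr_adj x y.
Proof. by case: phi_aut. Qed.

Let phi_inj : injective phi.
Proof. by case: phi_aut => /bij_inj. Qed.

Lemma hull_aut x y w u : hull x y w u <-> hull (phi x) (phi y) (phi w) (phi u).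
Proof.
rewrite /hull !phi_adj; split; first by case=> [->|[->|]]; auto.
by case=> [/phi_inj|[/phi_inj|]]; auto.
Qed.

Lemma collinear_aut x y w : collinear x y w -> collinear (phi x) (phi y) (phi w).
Proof.
case: phi_aut => [[phi' phiK phi'K] _].
case=> [xy xw yw [y' [w' [xy' xw' y'w' sep]]]]; split; rewrite ?phi_adj //.
exists (phi y'), (phi w'); split; rewrite ?phi_adj // => u v.
rewrite -(phi'K u) -(phi'K v) -!hull_aut phi_adj => /sep hsep /hsep[neq ->].
by split => // /phi_inj.
Qed.

Lemma same_line_aut x y w : (3 < m)%N -> (2 < n)%N ->
  same_line x y w -> same_line (phi x) (phi y) (phi w).
Proof.
move=> m_gt3 n_gt2 [a [b [alpha [beta [ab alpha0 beta0 yE wE]]]]].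
have xy : csr_adj (phi x) (phi y) by rewrite phi_adj (csr_adj_edelta ab alpha0 yE).
case: (eqVneq alpha beta) => [eq_ab|alpha_beta].
  have <- : y = w by apply: val_inj; rewrite yE wE eq_ab.
  case/csr_adjP: xy => p [q [gamma [pq gamma0 yE']]].
  by exists p, q, gamma, gamma.
have yw := csr_adj_same_line ab alpha_beta yE wE.
have col := collinear_aut (line_collinear m_gt3 n_gt2 ab alpha0 beta0 yE wE yw).
have xw : csr_adj (phi x) (phi w) by rewrite phi_adj (csr_adj_edelta ab beta0 wE).
rewrite -phi_adj in yw.
by case: (triangle_cases xy xw yw) => // /star_not_collinear.
Qed.

End AutomorphismInvariance.

Lemma csr_automorphism_inv m n (psi g : csr_vertex m n -> csr_vertex m n) :
  csr_automorphism psi -> cancel psi g -> cancel g psi -> csr_automorphism g.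
Proof.
move=> [_ psi_adj] psiK gK; split; first by exists psi.
by move=> x y; rewrite -psi_adj !gK.
Qed.

Section Automorphism.
Variables m n : nat.
Hypotheses (m_gt3 : (3 < m)%N) (n_gt2 : (2 < n)%N).
Local Notation vertex := (csr_vertex m n).
Variables psi psi' : vertex -> vertex.
Hypotheses (psi_aut : csr_automorphism psi) (psiK : cancel psi psi') (psi'K : cancel psi' psi).

Let psi_adj x y : csr_adj (psi x) (psi y) = csr_adj x y.
Proof. by case: psi_aut. Qed.

Let psi_inj : injective psi.
Proof. exact: can_inj psiK. Qed.

Let one_mone : (1 : 'Z_n) != - 1.
Proof. exact: Zp_one_neq_opp. Qed.

Let one0 : (1 : 'Z_n) != 0.
Proof. exact: oner_neq0. Qed.

Let mone0 : (- 1 : 'Z_n) != 0.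
Proof. exact: oppr_neq0 one0. Qed.

Lemma same_line_autE x y w : same_line (psi x) (psi y) (psi w) <-> same_line x y w.
Proof.
split; last exact: same_line_aut.
by move/(same_line_aut (csr_automorphism_inv psi_aut psiK psi'K)); rewrite !psiK; apply.
Qed.

Section Vertex.
Variable x : vertex.

Lemma image_same_line c t alpha beta p q gamma : c != t -> alpha != 0 -> beta != 0 ->
  p != q -> gamma != 0 ->
  val (psi (csr_shift x c t alpha)) = val (psi x) + edelta p q gamma ->
  exists delta, delta != 0 /\
    val (psi (csr_shift x c t beta)) = val (psi x) + edelta p q delta.
Proof.
move=> ct alpha0 beta0 pq gamma0 E.
have /same_line_autE [c' [t' [g1 [g2 [ct' g10 g20 E1 E2]]]]] :
    same_line x (csr_shift x c t alpha) (csr_shift x c t beta) by exists c, t, alpha, beta.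
case: (edelta_eq pq gamma0 ct' (offset_uniq E E1)) => [[? [? _]]|[? [? _]]]; subst.
  by exists g2.
by exists (- g2); rewrite oppr_eq0 E2 edeltaC.
Qed.

Lemma image_dirs_inj c t alpha c' t' alpha' p q beta beta' :
  c != t -> alpha != 0 -> c' != t' -> alpha' != 0 -> p != q -> beta != 0 -> beta' != 0 ->
  val (psi (csr_shift x c t alpha)) = val (psi x) + edelta p q beta ->
  val (psi (csr_shift x c' t' alpha')) = val (psi x) + edelta p q beta' ->
  (c = c' /\ t = t') \/ (c = t' /\ t = c').
Proof.
move=> ct alpha0 ct' alpha0' pq beta0 beta0' E E'.
have /same_line_autE : same_line (psi x) (psi (csr_shift x c t alpha))
    (psi (csr_shift x c' t' alpha')) by exists p, q, beta, beta'.
by move/(same_line_dirs ct alpha0 ct' alpha0'); apply.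
Qed.

Lemma image_star c t1 t2 alpha : c != t1 -> c != t2 -> t1 != t2 -> alpha != 0 ->
  star (psi x) (psi (csr_shift x c t1 alpha)) (psi (csr_shift x c t2 alpha)).
Proof.
move=> ct1 ct2 t12 alpha0.
have xy : csr_adj (psi x) (psi (csr_shift x c t1 alpha)) by rewrite psi_adj csr_adj_shift.
have xw : csr_adj (psi x) (psi (csr_shift x c t2 alpha)) by rewrite psi_adj csr_adj_shift.
have yw : csr_adj (psi (csr_shift x c t1 alpha)) (psi (csr_shift x c t2 alpha)).
  by rewrite psi_adj (csr_adj_star t12 alpha0 (csr_shiftE _ _ _ _) (csr_shiftE _ _ _ _)).
case: (triangle_cases xy xw yw) => // /same_line_autE.
move/(same_line_dirs ct1 alpha0 ct2 alpha0).
move/(_ (csr_shiftE _ _ _ _) (csr_shiftE _ _ _ _)).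
by case=> [[_ t12E]|[ct2E _]]; [rewrite t12E eqxx in t12 | rewrite ct2E eqxx in ct2].
Qed.

Lemma image_star_scalar c t1 t2 alpha p q1 q2 beta1 beta2 :
  c != t1 -> c != t2 -> t1 != t2 -> alpha != 0 ->
  p != q1 -> p != q2 -> beta1 != 0 -> beta2 != 0 ->
  val (psi (csr_shift x c t1 alpha)) = val (psi x) + edelta p q1 beta1 ->
  val (psi (csr_shift x c t2 alpha)) = val (psi x) + edelta p q2 beta2 ->
  q1 != q2 /\ beta1 = beta2.
Proof.
move=> ct1 ct2 t12 alpha0 pq1 pq2 beta10 beta20 E1 E2.
have q12 : q1 != q2.
  apply/eqP => q12; rewrite q12 in E1.
  by case: (image_dirs_inj ct1 alpha0 ct2 alpha0 pq2 beta10 beta20 E1 E2) =>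
    [[_ t12E]|[ct2E _]]; [rewrite t12E eqxx in t12 | rewrite ct2E eqxx in ct2].
split => //; apply: star_same_scalar pq1 pq2 q12 beta10 beta20 E1 E2 _.
by rewrite psi_adj (csr_adj_star t12 alpha0 (csr_shiftE _ _ _ _) (csr_shiftE _ _ _ _)).
Qed.

Lemma image_shift_sign c t p q beta : c != t ->
  val (psi (csr_shift x c t 1)) = val (psi x) + edelta p q beta ->
  val (psi (csr_shift x c t (- 1))) = val (psi x) + edelta p q beta -> False.
Proof.
move=> ct E E'; have : csr_shift x c t 1 = csr_shift x c t (- 1).
  by apply: psi_inj; apply: val_inj; rewrite E E'.
move/(congr1 val); rewrite !csr_shiftE => /addrI /(edelta_inj ct) /eqP.
by rewrite (negbTE one_mone).
Qed.

(* The shifts by [- 1] have the same image directions; their scalars [z] are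
   forced to satisfy [z = - z], hence [z = gamma], so the shifts of [x] by [1]
   and [- 1] along [a d1] would have the same image. *)
Lemma image_star_no_triangle a d1 d2 d3 p q r gamma :
  a != d1 -> a != d2 -> a != d3 -> d1 != d2 -> d1 != d3 -> d2 != d3 ->
  p != q -> p != r -> q != r -> gamma != 0 -> gamma = - gamma ->
  val (psi (csr_shift x a d1 1)) = val (psi x) + edelta p q gamma ->
  val (psi (csr_shift x a d2 1)) = val (psi x) + edelta p r gamma ->
  val (psi (csr_shift x a d3 1)) = val (psi x) + edelta q r (- gamma) -> False.
Proof.
move=> ad1 ad2 ad3 d12 d13 d23 pq pr qr gamma0 gammaN E1 E2 E3.
have [z1 [z10 F1]] := image_same_line ad1 one0 mone0 pq gamma0 E1.
have [z2 [z20 F2]] := image_same_line ad2 one0 mone0 pr gamma0 E2.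
have [z3 [z30 F3]] := image_same_line ad3 one0 mone0 qr (oppr_neq0 gamma0) E3.
have [_ z12] := image_star_scalar ad1 ad2 d12 mone0 pq pr z10 z20 F1 F2.
have qp : q != p by rewrite eq_sym.
have rp : r != p by rewrite eq_sym.
have rq : r != q by rewrite eq_sym.
rewrite edeltaC in F1.
have [_ z13] := image_star_scalar ad1 ad3 d13 mone0 qp qr (oppr_neq0 z10) z30 F1 F3.
rewrite edeltaC in F2; rewrite edeltaC in F3.
have [_ z23] :=
  image_star_scalar ad2 ad3 d23 mone0 rp rq (oppr_neq0 z20) (oppr_neq0 z30) F2 F3.
have z1N : z1 = - z1 by rewrite z13 -(oppr_inj z23) z12.
have z1_gamma := Zp_self_opp_uniq z10 z1N gamma0 gammaN.
by apply: (image_shift_sign ad1 E1); rewrite F1 -edeltaC z1_gamma.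
Qed.

Definition is_center a p := forall d, a != d -> forall alpha, alpha != 0 ->
  exists q beta, [/\ p != q, beta != 0 &
    val (psi (csr_shift x a d alpha)) = val (psi x) + edelta p q beta].

Lemma exists_center a : exists p, is_center a p.
Proof.
have [d1] : exists d1, d1 \notin [:: a] by apply: exists_notin => /=; lia.
have [d2] : exists d2, d2 \notin [:: a; d1] by apply: exists_notin => /=; lia.
rewrite !inE !negb_or => /andP[d2a d2d1] d1a.
have ad1 : a != d1 by rewrite eq_sym.
have ad2 : a != d2 by rewrite eq_sym.
have d12 : d1 != d2 by rewrite eq_sym.
have [p [q [r [gamma [pq pr qr gamma0 [E1 E2]]]]]] := image_star ad1 ad2 d12 one0.
exists p => d ad alpha alpha0.
suff [q' [beta [pq' beta0 E]]] : exists q' beta, [/\ p != q', beta != 0 &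
    val (psi (csr_shift x a d 1)) = val (psi x) + edelta p q' beta].
  have [beta' [beta'0 E']] := image_same_line ad one0 alpha0 pq' beta0 E.
  by exists q', beta'.
case: (eqVneq d d1) => [->|dd1]; first by exists q, gamma.
case: (eqVneq d d2) => [->|dd2]; first by exists r, gamma.
have d1d : d1 != d by rewrite eq_sym.
have d2d : d2 != d by rewrite eq_sym.
have [c [t1 [t2 [al [ct1 ct2 _ al0 [F1 F]]]]]] := image_star ad1 ad d1d one0.
case: (edelta_eq pq gamma0 ct1 (offset_uniq E1 F1)) => [[-> _]|[_ [qc alE]]].
  by exists t2, al; split.
rewrite -qc alE in F ct2.
have [c' [s1 [s2 [al' [cs1 cs2 _ al'0 [G2 G]]]]]] := image_star ad2 ad d2d one0.
case: (edelta_eq pr gamma0 cs1 (offset_uniq E2 G2)) => [[-> _]|[_ [rc' al'E]]].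
  by exists s2, al'; split.
rewrite -rc' al'E in G cs2.
case: (edelta_eq ct2 (oppr_neq0 gamma0) cs2 (offset_uniq F G)) => [[qr' _]|[_ [t2r gammaN]]].
  by rewrite qr' eqxx in qr.
rewrite t2r in F; rewrite opprK in gammaN.
by case: (image_star_no_triangle ad1 ad2 ad d12 d1d d2d pq pr qr gamma0 (esym gammaN) E1 E2 F).
Qed.

Lemma center_inj s : (forall a, is_center a (s a)) -> injective s.
Proof.
move=> center c t sct; case: (eqVneq c t) => // ct; exfalso.
have [u] : exists u, u \notin [:: c; t] by apply: exists_notin => /=; lia.
rewrite !inE !negb_or => /andP[uc ut].
have cu : c != u by rewrite eq_sym.
have tu : t != u by rewrite eq_sym.
have tc : t != c by rewrite eq_sym.
have [q1 [g1 [pq1 g10 A1]]] := center c t ct 1 one0.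
have [q2 [g2 [pq2 g20 A2]]] := center c u cu 1 one0.
have [q3 [g3 [pq3 g30 A3]]] := center t u tu 1 one0.
have [q4 [g4 [pq4 g40 A4]]] := center t c tc 1 one0.
rewrite -sct in pq3 pq4 A3 A4.
have [q12 g12] := image_star_scalar ct cu tu one0 pq1 pq2 g10 g20 A1 A2.
have [q34 g34] := image_star_scalar tu tc uc one0 pq3 pq4 g30 g40 A3 A4.
rewrite csr_shiftC in A2; rewrite csr_shiftC in A3.
have [_ g23] := image_star_scalar uc ut ct mone0 pq2 pq3 g20 g30 A2 A3.
have [g' [g'0 A1']] := image_same_line ct one0 mone0 pq1 g10 A1.
rewrite -csr_shiftC in A1'.
case: (edelta_eq pq4 g40 pq1 (offset_uniq A4 A1')) => [[_ [q41 _]]|[scq1 _]].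
  by apply: (image_shift_sign ct A1); rewrite -csr_shiftC A4 q41 -g34 -g23 -g12.
by rewrite scq1 eqxx in pq1.
Qed.

Definition maps_lines_at (s : 'I_m -> 'I_m) := forall c t alpha, c != t -> alpha != 0 ->
  exists beta, beta != 0 /\
    val (psi (csr_shift x c t alpha)) = val (psi x) + edelta (s c) (s t) beta.

Lemma exists_maps_lines_at : exists s, injective s /\ maps_lines_at s.
Proof.
have [s center] := fin_all_exists exists_center.
have s_inj := center_inj center.
exists s; split => // c t alpha ct alpha0.
have tc : t != c by rewrite eq_sym.
have [q [beta [pq beta0 E]]] := center c t ct alpha alpha0.
have [q' [beta' [pq' beta'0 E']]] := center t c tc (- alpha) (oppr_neq0 alpha0).
rewrite csr_shiftC opprK in E'.
case: (edelta_eq pq beta0 pq' (offset_uniq E E')) => [[/s_inj sct _]|[_ [<- _]]].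
  by rewrite sct eqxx in ct.
by exists beta.
Qed.

End Vertex.

Section Edge.
Variables (x y : vertex) (a b : 'I_m) (alpha : 'Z_n) (s t : 'I_m -> 'I_m).
Hypotheses (ab : a != b) (alpha0 : alpha != 0) (yE : val y = val x + edelta a b alpha).
Hypotheses (s_inj : injective s) (t_inj : injective t).
Hypotheses (s_lines : maps_lines_at x s) (t_lines : maps_lines_at y t).

Let yE' : y = csr_shift x a b alpha.
Proof. exact: val_inj. Qed.

Lemma maps_lines_at_edge_third c : c != a -> c != b ->
  (t b = s b /\ t c = s c) \/ (t b = s c /\ t c = s b).
Proof.
move=> ca cb; have ac : a != c by rewrite eq_sym.
have bc : b != c by rewrite eq_sym.
have wE : csr_shift y b c alpha = csr_shift x a c alpha.
  by apply: val_inj; rewrite !csr_shiftE yE -addrA edelta_trans.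
have [g1 [g10 A1]] := s_lines ab alpha0; rewrite -yE' in A1.
have [g3 [g30 A3]] := s_lines ac alpha0.
have [g4 [g40 A4]] := t_lines bc alpha0; rewrite wE in A4.
have sab : s a != s b by rewrite (inj_eq s_inj).
have sac : s a != s c by rewrite (inj_eq s_inj).
have sbc : s b != s c by rewrite (inj_eq s_inj).
have tbc : t b != t c by rewrite (inj_eq t_inj).
have adj : csr_adj (psi y) (psi (csr_shift x a c alpha)).
  by rewrite psi_adj yE' (csr_adj_star bc alpha0 (csr_shiftE _ _ _ _) (csr_shiftE _ _ _ _)).
have g13 := star_same_scalar sab sac sbc g10 g30 A1 A3 adj.
have A3' : val (psi (csr_shift x a c alpha)) = val (psi y) + edelta (s b) (s c) g1.
  by rewrite A3 A1 -g13 -addrA edelta_trans.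
by case: (edelta_eq tbc g40 sbc (offset_uniq A4 A3')) => [[-> [-> _]]|[-> [-> _]]];
  [left | right].
Qed.

Lemma maps_lines_at_edge : s =1 t.
Proof.
have ba : b != a by rewrite eq_sym.
have xE : x = csr_shift y b a alpha.
  by apply: val_inj; rewrite csr_shiftE yE -addrA edeltaC edeltaD addNr edelta0 addr0.
have [g1 [g10 A1]] := s_lines ab alpha0; rewrite -yE' in A1.
have [g2 [g20 A2]] := t_lines ba alpha0; rewrite -xE in A2.
have A2' : val (psi y) = val (psi x) + edelta (t b) (t a) (- g2).
  by rewrite A2 -addrA edeltaD subrr edelta0 addr0.
have sab : s a != s b by rewrite (inj_eq s_inj).
have tba : t b != t a by rewrite (inj_eq t_inj).
have [c] : exists c, c \notin [:: a; b] by apply: exists_notin => /=; lia.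
rewrite !inE !negb_or => /andP[ca cb].
case: (edelta_eq sab g10 tba (offset_uniq A1 A2')) => [[satb _]|[sata [sbtb _]]].
  case: (maps_lines_at_edge_third ca cb) => [[tbsb _]|[tbsc _]].
    by rewrite satb tbsb eqxx in sab.
  by move: ca; rewrite -(s_inj (etrans satb tbsc)) eqxx.
move=> i; case: (eqVneq i a) => [->//|ia]; case: (eqVneq i b) => [->//|ib].
case: (maps_lines_at_edge_third ia ib) => [[_ ->]|[tbsi _]] //.
by move: ib; rewrite -(s_inj (etrans sbtb tbsi)) eqxx.
Qed.

End Edge.

Lemma maps_lines_everywhere s : injective s -> maps_lines_at (csr_zero m n) s ->
  forall x, maps_lines_at x s.
Proof.
move=> s_inj s0; apply: csr_vertex_ind => // y x a b alpha ab alpha0 xE sy.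
have [t [t_inj tx]] := exists_maps_lines_at x.
have st := maps_lines_at_edge ab alpha0 xE s_inj t_inj sy tx.
move=> c d beta cd beta0; have [gamma [gamma0 E]] := tx c d beta cd beta0.
by exists gamma; rewrite !st.
Qed.

Section Image.
Variable s : 'I_m -> 'I_m.
Hypotheses (s_inj : injective s) (s_lines : forall x, maps_lines_at x s).

Lemma image_csr_part a b xi : a != b ->
  psi @: csr_part n a b xi = csr_part n (s a) (s b) (psi xi).
Proof.
move=> ab; apply/eqP; rewrite eqEcard card_imset // !card_csr_part ?(inj_eq s_inj) //.
rewrite leqnn andbT; apply/subsetP => _ /imsetP[_ /[!csr_partE] /imsetP[alpha _ ->] ->].
apply/imsetP; case: (eqVneq alpha 0) => [->|alpha0].
  by exists 0; rewrite ?csr_shift0.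
have [beta [_ E]] := s_lines xi ab alpha0.
by exists beta => //; apply: val_inj.
Qed.

Lemma image_csr_partition a b : a != b ->
  image_partition psi (csr_partition n a b) = csr_partition n (s a) (s b).
Proof.
move=> ab; apply/setP => P; apply/imsetP/imsetP => [[_ /imsetP[xi _ ->] ->]|[eta _ ->]].
  by exists (psi xi); rewrite ?image_csr_part.
exists (csr_part n a b (psi' eta)); first exact: imset_f.
by rewrite image_csr_part // psi'K.
Qed.

End Image.

End Automorphism.

Theorem lemma5 (m n : nat) (hm : (3 < m)%N) (hn : (3 < n)%N)
  (psi : csr_vertex m n -> csr_vertex m n) (hpsi : csr_automorphism psi) :
  exists sigma : 'S_m, forall a b : 'I_m, a != b ->
    image_partition psi (csr_partition n a b) = csr_partition n (sigma a) (sigma b).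
Proof.
have n_gt2 : (2 < n)%N by lia.
have [[psi' psiK psi'K] _] := hpsi.
have [s [s_inj s0]] := exists_maps_lines_at hm n_gt2 hpsi psiK psi'K (csr_zero m n).
have s_lines := maps_lines_everywhere hm n_gt2 hpsi psiK psi'K s_inj s0.
exists (perm s_inj) => a b ab; rewrite !permE.
exact: image_csr_partition.
Qed.
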